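(* There exist a finite rank operator $S$ on $\ell_2$ (complex) with $\|I-S\|=1$, an element $\phi\in M_0(B_{\ell_2})$ of the fiber over $0$ of the spectrum of $H^\infty(B_{\ell_2})$, and $f\in H^\infty(B_{\ell_2})$ such that, with $P=I-S$, $\hat f(\phi)\neq\widehat{f\circ P}(\phi)$.
   Context: $H^\infty(B_{\ell_2})$ is the uniform algebra of all bounded holomorphic functions on the open unit ball $B_{\ell_2}$ of complex $\ell_2$, with the supremum norm. Its spectrum consists of the nonzero multiplicative linear functionals on it; the fiber over $0$, $M_0(B_{\ell_2})$, is the set of those $\phi$ in the spectrum with $\phi(x^* )=0$ for every continuous linear functional $x^*$ on $\ell_2$. $\hat f(\phi)=\phi(f)$. *)

From Stdlib Require Import Reals ClassicalEpsilon.
Open Scope R_scope.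

Record Cplx : Type := mkC { Re : R ; Im : R }.
Definition C0 : Cplx := mkC 0 0.
Definition Cadd (z w : Cplx) : Cplx := mkC (Re z + Re w) (Im z + Im w).
Definition Copp (z : Cplx) : Cplx := mkC (- Re z) (- Im z).
Definition Csub (z w : Cplx) : Cplx := Cadd z (Copp w).
Definition Cmul (z w : Cplx) : Cplx :=
  mkC (Re z * Re w - Im z * Im w) (Re z * Im w + Im z * Re w).
Definition Cnorm2 (z : Cplx) : R := Re z * Re z + Im z * Im z.
Definition Cabs (z : Cplx) : R := sqrt (Cnorm2 z).

Definition V := nat -> Cplx.
Definition vadd (x y : V) : V := fun n => Cadd (x n) (y n).
Definition vsub (x y : V) : V := fun n => Csub (x n) (y n).
Definition vscal (c : Cplx) (x : V) : V := fun n => Cmul c (x n).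

Definition is_l2 (x : V) : Prop :=
  exists l, infinite_sum (fun n => Cnorm2 (x n)) l.

(* the l2 norm (meaningful for x in l2, where the sum is unique) *)
Definition l2norm (x : V) : R :=
  sqrt (epsilon (inhabits 0) (fun l => infinite_sum (fun n => Cnorm2 (x n)) l)).

Definition ball (x : V) : Prop := is_l2 x /\ l2norm x < 1.

Definition bounded_linear_functional (L : V -> Cplx) : Prop :=
  (forall x y, is_l2 x -> is_l2 y -> L (vadd x y) = Cadd (L x) (L y)) /\
  (forall c x, is_l2 x -> L (vscal c x) = Cmul c (L x)) /\
  (exists M, forall x, is_l2 x -> Cabs (L x) <= M * l2norm x).

Definition bounded_operator (S : V -> V) : Prop :=
  (forall x, is_l2 x -> is_l2 (S x)) /\
  (forall x y, is_l2 x -> is_l2 y -> S (vadd x y) = vadd (S x) (S y)) /\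
  (forall c x, is_l2 x -> S (vscal c x) = vscal c (S x)) /\
  (exists M, forall x, is_l2 x -> l2norm (S x) <= M * l2norm x).

Fixpoint Csum (n : nat) (g : nat -> Cplx) : Cplx :=
  match n with
  | O => C0
  | S m => Cadd (Csum m g) (g m)
  end.

Definition finite_rank_operator (T : V -> V) : Prop :=
  bounded_operator T /\
  exists (n : nat) (v : nat -> V),
    (forall i, (i < n)%nat -> is_l2 (v i)) /\
    forall x, is_l2 x -> exists c : nat -> Cplx,
      T x = (fun k => Csum n (fun i => Cmul (c i) (v i k))).

Definition opnorm_is (T : V -> V) (r : R) : Prop :=
  is_lub (fun s => exists x, is_l2 x /\ l2norm x <= 1 /\ s = l2norm (T x)) r.

Definition holomorphic_on_ball (f : V -> Cplx) : Prop :=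
  forall a, ball a ->
    exists L, bounded_linear_functional L /\
      forall eps, 0 < eps -> exists delta, 0 < delta /\
        forall h, is_l2 h -> l2norm h < delta -> ball (vadd a h) ->
          Cabs (Csub (f (vadd a h)) (Cadd (f a) (L h))) <= eps * l2norm h.

(** H^infty(B_l2): bounded holomorphic functions on the ball
    (functions are identified when they agree on the ball, see below) *)
Definition Hinf (f : V -> Cplx) : Prop :=
  holomorphic_on_ball f /\ exists M, forall x, ball x -> Cabs (f x) <= M.

Definition fadd (f g : V -> Cplx) : V -> Cplx := fun x => Cadd (f x) (g x).
Definition fmul (f g : V -> Cplx) : V -> Cplx := fun x => Cmul (f x) (g x).
Definition fscal (c : Cplx) (f : V -> Cplx) : V -> Cplx := fun x => Cmul c (f x).

Definition in_spectrum (phi : (V -> Cplx) -> Cplx) : Prop :=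
  (forall f g, Hinf f -> Hinf g -> (forall x, ball x -> f x = g x) ->
     phi f = phi g) /\
  (forall f g, Hinf f -> Hinf g -> phi (fadd f g) = Cadd (phi f) (phi g)) /\
  (forall c f, Hinf f -> phi (fscal c f) = Cmul c (phi f)) /\
  (forall f g, Hinf f -> Hinf g -> phi (fmul f g) = Cmul (phi f) (phi g)) /\
  (exists f, Hinf f /\ phi f <> C0).

Definition in_fiber0 (phi : (V -> Cplx) -> Cplx) : Prop :=
  in_spectrum phi /\
  forall L, bounded_linear_functional L -> phi L = C0.

(* Write x = (x_0, x_1, ...) for x in l2 and let B(a, h) = sum_(k >= 1) a_k h_k
   be the (complex bilinear, not sesquilinear) form on the tail coordinates.
   The example is
     S = the rank-one projection x |-> x_0 e_0,        P = I - S,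
     f(x) = x_0^2 / (1 - B(x, x)),
     phi(g) = lim_U g(z_n),  z_n = a_n e_0 + b_n e_(n+1),
   where a_n^2 = t_n / 2, b_n^2 = 1 - t_n, t_n = 1/(n+2), and U is a free
   ultrafilter on nat.  The facts needed are:
   - Re (1 - B(x, x)) >= 1 - ||x||^2 + |x_0|^2, so |f| <= 1 on the ball, and
     f is holomorphic there with an explicit derivative and quadratic
     remainder estimate;
   - ||P|| = 1 and f o P = 0 since (P x)_0 = 0;
   - the z_n lie in the ball and f(z_n) = 1/2;
   - limits along U of bounded sequences exist and are additive and
     multiplicative, so phi is a character of H^infty(B_l2);
   - z_n tends weakly to 0 (a_n -> 0 and L(e_k) -> 0 for every bounded linear
     functional L), so phi lies over 0.
   Hence phi(f) = 1/2 <> 0 = phi(f o P). *)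

From Stdlib Require Import Reals ClassicalEpsilon Lra Lia Psatz.
From Stdlib Require Import FunctionalExtensionality Classical.
From Coquelicot Require Import Coquelicot.
(* Imported after Coquelicot so that Re, Im refer to the fields of Cplx. *)
From mathcomp Require ssreflect ssrbool boolp classical_sets filter.
Open Scope R_scope.

(** * Free ultrafilters on nat *)

Definition free_ultrafilter (U : (nat -> Prop) -> Prop) : Prop :=
  (forall A B, U A -> U B -> U (fun n => A n /\ B n)) /\
  (forall A B : nat -> Prop, (forall n, A n -> B n) -> U A -> U B) /\
  ~ U (fun _ => False) /\
  (forall A, U A \/ U (fun n => ~ A n)) /\
  (forall N, U (fun n => (N <= n)%nat)).

(* Existence: the ultrafilter lemma of mathcomp-analysis applied to the
   Frechet filter. *)
Module FrechetUltrafilter.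
Import ssreflect ssrbool boolp classical_sets filter.

Lemma exists_free_ultrafilter : exists U, free_ultrafilter U.
Proof.
have [G [GU sub]] := @ultraFilterLemma nat eventually _.
exists G; split; [|split; [|split; [|split]]].
- by move=> A B ? ?; apply: filterI.
- by move=> A B AB ?; apply: filterS AB _.
- by move=> G0; have : G set0 by []; apply: filter_not_empty.
- by move=> A; case: (in_ultra_setVsetC A GU) => ?; [left|right].
- by move=> N; apply: sub; exists N => // n /= /ssrnat.leP.
Qed.

End FrechetUltrafilter.

(** * Complex numbers: transfer to Coquelicot's field C *)

Definition toC (z : Cplx) : C := (Re z, Im z).
Definition ofC (c : C) : Cplx := mkC (fst c) (snd c).

Lemma toC_ofC c : toC (ofC c) = c.
Proof. destruct c; reflexivity. Qed.

Lemma toC_inj z w : toC z = toC w -> z = w.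
Proof. destruct z, w; unfold toC; simpl; intro H; injection H; intros; subst; auto. Qed.

Lemma toC_add z w : toC (Cadd z w) = (toC z + toC w)%C. Proof. reflexivity. Qed.
Lemma toC_mul z w : toC (Cmul z w) = (toC z * toC w)%C. Proof. reflexivity. Qed.
Lemma toC_sub z w : toC (Csub z w) = (toC z - toC w)%C. Proof. reflexivity. Qed.
Lemma toC_C0 : toC C0 = 0%C. Proof. reflexivity. Qed.

Ltac cplx_ring := apply toC_inj; unfold toC; simpl; f_equal; ring.

Lemma Cabs_C z : Cabs z = Cmod (toC z).
Proof. unfold Cabs, Cmod, Cnorm2, toC; simpl; f_equal; ring. Qed.

Lemma Cnorm2_C z : Cnorm2 z = (Cmod (toC z))^2.
Proof. unfold Cmod, Cnorm2, toC; cbv [fst snd]. rewrite pow2_sqrt. ring. nra. Qed.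

Lemma Cnorm2_toC w : Cnorm2 w = fst (toC w) * fst (toC w) + snd (toC w) * snd (toC w).
Proof. reflexivity. Qed.

Lemma Cnorm2_ge0 z : 0 <= Cnorm2 z.
Proof. unfold Cnorm2; nra. Qed.

Lemma Cmod_le_parts (c : C) : Cmod c <= Rabs (fst c) + Rabs (snd c).
Proof.
  destruct c as [a b]; unfold Cmod; cbv [fst snd].
  apply Rsqr_incr_0_var. 2: apply Rplus_le_le_0_compat; apply Rabs_pos.
  rewrite Rsqr_sqrt. 2: nra. unfold Rsqr.
  rewrite <- (pow2_abs a), <- (pow2_abs b).
  pose proof (Rabs_pos a); pose proof (Rabs_pos b); nra.
Qed.

Lemma fst_le_Cmod (c : C) : Rabs (fst c) <= Cmod c.
Proof.
  destruct c as [a b]; unfold Cmod; cbv [fst snd].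
  rewrite <- sqrt_Rsqr_abs. apply sqrt_le_1_alt. unfold Rsqr; nra.
Qed.

Lemma snd_le_Cmod (c : C) : Rabs (snd c) <= Cmod c.
Proof.
  destruct c as [a b]; unfold Cmod; cbv [fst snd].
  rewrite <- sqrt_Rsqr_abs. apply sqrt_le_1_alt. unfold Rsqr; nra.
Qed.

(* Monotone versions of the triangle inequality and multiplicativity, used to
   bound polynomial expressions term by term. *)
Lemma Cmod_le_mult (x y : C) A B : Cmod x <= A -> Cmod y <= B -> Cmod (x * y) <= A * B.
Proof. intros. rewrite Cmod_mult. apply Rmult_le_compat; auto; apply Cmod_ge_0. Qed.

Lemma Cmod_le_add (x y : C) A B : Cmod x <= A -> Cmod y <= B -> Cmod (x + y) <= A + B.
Proof. intros. eapply Rle_trans. apply Cmod_triangle. lra. Qed.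

Lemma Cmod_le_sub (x y : C) A B : Cmod x <= A -> Cmod y <= B -> Cmod (x - y) <= A + B.
Proof. intros. unfold Cminus. eapply Rle_trans. apply Cmod_triangle. rewrite Cmod_opp. lra. Qed.

Lemma Cmod_sub_lower (x y : C) : Cmod x - Cmod y <= Cmod (x - y).
Proof.
  assert (Cmod x <= Cmod (x - y) + Cmod y).
  { replace x with ((x - y) + y)%C at 1 by ring. apply Cmod_triangle. }
  lra.
Qed.

Lemma Cmod_2 : Cmod 2 = 2.
Proof. rewrite Cmod_R. apply Rabs_right. lra. Qed.

Lemma Cmod_sq_le1 (z : C) : Cmod z ^ 2 <= 1 -> Cmod z <= 1.
Proof. intro H. pose proof (Cmod_ge_0 z). destruct (Rle_dec (Cmod z) 1); auto. simpl in H; nra. Qed.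

(** * Limits along a free ultrafilter *)

Section UltrafilterLimits.
Variable U : (nat -> Prop) -> Prop.
Hypothesis HU : free_ultrafilter U.

Lemma U_and A B : U A -> U B -> U (fun n => A n /\ B n).
Proof. apply HU. Qed.

Lemma U_mono (A B : nat -> Prop) : (forall n, A n -> B n) -> U A -> U B.
Proof. apply HU. Qed.

Lemma U_nonempty A : U A -> exists n, A n.
Proof.
  intro H. apply NNPP. intro Hn. apply (proj1 (proj2 (proj2 HU))).
  apply (U_mono A); auto. intros n An. apply Hn. exists n; auto.
Qed.

Lemma U_eventually (A : nat -> Prop) N : (forall n, (N <= n)%nat -> A n) -> U A.
Proof. intro H. apply (U_mono (fun n => (N <= n)%nat)); auto. apply HU. Qed.

Lemma U_true : U (fun _ => True).
Proof. apply (U_eventually _ O); auto. Qed.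

(* Every bounded real sequence has a limit along U: the supremum of the t
   with t <= u n for U-many n. *)
Lemma Ulim_real_exists (u : nat -> R) M : (forall n, Rabs (u n) <= M) ->
  exists l, forall eps, 0 < eps -> U (fun n => Rabs (u n - l) < eps).
Proof.
  intro HM.
  set (E := fun t => U (fun n => t <= u n)).
  assert (HB : bound E).
  { exists M. intros t Ht. destruct (U_nonempty _ Ht) as [n Hn].
    pose proof (HM n). apply Rabs_le_between in H. lra. }
  assert (HE : exists t, E t).
  { exists (-M). apply (U_mono (fun _ => True)); [|apply U_true].
    intros n _. pose proof (HM n). apply Rabs_le_between in H. lra. }
  destruct (completeness E HB HE) as [l [Hub Hlub]].
  exists l. intros eps Heps.
  assert (Hbelow : U (fun n => l - eps < u n)).
  { apply NNPP. intro Hn. assert (l <= l - eps).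
    { apply Hlub. intros t Ht. destruct (Rle_dec t (l - eps)); auto. exfalso. apply Hn.
      apply (U_mono (fun n => t <= u n)); auto. intros; lra. }
    lra. }
  assert (Habove : U (fun n => u n < l + eps)).
  { destruct (proj1 (proj2 (proj2 (proj2 HU))) (fun n => u n < l + eps)) as [|H]; auto.
    exfalso. assert (E (l + eps)).
    { apply (U_mono _ _ (fun n (Hn : ~ u n < l + eps) => Rnot_lt_le _ _ Hn) H). }
    apply Hub in H0. lra. }
  apply (U_mono (fun n => l - eps < u n /\ u n < l + eps)).
  - intros n [h1 h2]. apply Rabs_def1; lra.
  - apply U_and; auto.
Qed.

Definition Uconv (s : nat -> Cplx) (l : Cplx) : Prop :=
  forall eps, 0 < eps -> U (fun n => Cmod (toC (s n) - toC l) < eps).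

Definition Ubounded (s : nat -> Cplx) : Prop := exists M, forall n, Cmod (toC (s n)) <= M.

Lemma Uconv_exists s : Ubounded s -> exists l, Uconv s l.
Proof.
  intros [M HM].
  destruct (Ulim_real_exists (fun n => Re (s n)) M) as [l1 H1].
  { intro n. eapply Rle_trans. apply (fst_le_Cmod (toC (s n))). auto. }
  destruct (Ulim_real_exists (fun n => Im (s n)) M) as [l2 H2].
  { intro n. eapply Rle_trans. apply (snd_le_Cmod (toC (s n))). auto. }
  exists (mkC l1 l2). intros eps Heps.
  apply (U_mono (fun n => Rabs (Re (s n) - l1) < eps/2 /\ Rabs (Im (s n) - l2) < eps/2)).
  2: apply U_and; [apply H1|apply H2]; lra.
  intros n [Hre Him]. eapply Rle_lt_trans. apply Cmod_le_parts.
  simpl. unfold Rminus in *. lra.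
Qed.

Lemma Uconv_unique s l1 l2 : Uconv s l1 -> Uconv s l2 -> l1 = l2.
Proof.
  intros H1 H2. apply toC_inj.
  destruct (Req_dec (Cmod (toC l1 - toC l2)) 0) as [E|E].
  - apply Cmod_eq_0 in E. replace (toC l1) with ((toC l1 - toC l2) + toC l2)%C by ring.
    rewrite E. ring.
  - exfalso. pose proof (Cmod_ge_0 (toC l1 - toC l2)).
    set (d := Cmod (toC l1 - toC l2)) in *.
    destruct (U_nonempty _ (U_and _ _ (H1 (d/2) ltac:(lra)) (H2 (d/2) ltac:(lra)))) as [n [A B]].
    assert (d <= Cmod (toC (s n) - toC l1) + Cmod (toC (s n) - toC l2)).
    { unfold d. replace (toC l1 - toC l2)%C with (-(toC (s n) - toC l1) + (toC (s n) - toC l2))%C by ring.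
      eapply Rle_trans. apply Cmod_triangle. rewrite Cmod_opp. lra. }
    lra.
Qed.

Lemma Uconv_const c : Uconv (fun _ => c) c.
Proof.
  intros eps Heps. apply (U_mono (fun _ => True)); [|apply U_true].
  intros n _. replace (toC c - toC c)%C with (RtoC 0) by ring. rewrite Cmod_0. auto.
Qed.

Lemma Uconv_add s t l m : Uconv s l -> Uconv t m -> Uconv (fun n => Cadd (s n) (t n)) (Cadd l m).
Proof.
  intros H1 H2 eps Heps.
  apply (U_mono (fun n => Cmod (toC (s n) - toC l) < eps/2 /\ Cmod (toC (t n) - toC m) < eps/2)).
  2: apply U_and; [apply H1|apply H2]; lra.
  intros n [Hs Ht]. rewrite !toC_add.
  replace (toC (s n) + toC (t n) - (toC l + toC m))%C
    with ((toC (s n) - toC l) + (toC (t n) - toC m))%C by ring.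
  eapply Rle_lt_trans. apply Cmod_triangle. lra.
Qed.

Lemma Uconv_mul s t l m M : (forall n, Cmod (toC (s n)) <= M) -> Uconv s l -> Uconv t m ->
  Uconv (fun n => Cmul (s n) (t n)) (Cmul l m).
Proof.
  intros HM H1 H2 eps Heps.
  assert (HM0 : 0 <= M) by (eapply Rle_trans; [apply Cmod_ge_0|apply (HM O)]).
  set (K := M + Cmod (toC m) + 1).
  assert (HK : 0 < K) by (pose proof (Cmod_ge_0 (toC m)); unfold K; lra).
  assert (Hek : 0 < eps / (2 * K)) by (apply Rdiv_lt_0_compat; lra).
  apply (U_mono (fun n => Cmod (toC (s n) - toC l) < eps/(2*K) /\
                          Cmod (toC (t n) - toC m) < eps/(2*K))).
  2: apply U_and; [apply H1|apply H2]; auto.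
  intros n [A B]. rewrite !toC_mul.
  replace (toC (s n) * toC (t n) - toC l * toC m)%C
    with (toC (s n) * (toC (t n) - toC m) + (toC (s n) - toC l) * toC m)%C by ring.
  eapply Rle_lt_trans. apply Cmod_triangle. rewrite !Cmod_mult.
  pose proof (HM n). pose proof (Cmod_ge_0 (toC (s n))). pose proof (Cmod_ge_0 (toC m)).
  pose proof (Cmod_ge_0 (toC (t n) - toC m)). pose proof (Cmod_ge_0 (toC (s n) - toC l)).
  assert (E1 : Cmod (toC (s n)) * Cmod (toC (t n) - toC m) <= K * (eps / (2 * K))).
  { apply Rmult_le_compat; try lra. unfold K; lra. }
  assert (E2 : Cmod (toC (s n) - toC l) * Cmod (toC m) < (eps / (2 * K)) * K).
  { apply Rle_lt_trans with ((eps / (2 * K)) * Cmod (toC m)).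
    - apply Rmult_le_compat_r; lra.
    - apply Rmult_lt_compat_l; auto. unfold K; lra. }
  assert (E3 : K * (eps / (2 * K)) = eps / 2) by (field; lra).
  lra.
Qed.

(* The limit along U, chosen by Hilbert's epsilon (meaningful for bounded
   sequences). *)
Definition Ulim (s : nat -> Cplx) : Cplx := epsilon (inhabits C0) (Uconv s).

Lemma Ulim_eq s l : Uconv s l -> Ulim s = l.
Proof.
  intro H. apply (Uconv_unique s); auto.
  apply (epsilon_spec (inhabits C0) (Uconv s)). exists l; auto.
Qed.

Lemma Ulim_spec s : Ubounded s -> Uconv s (Ulim s).
Proof.
  intro Hb. destruct (Uconv_exists s Hb) as [l Hl]. rewrite (Ulim_eq s l); auto.
Qed.

End UltrafilterLimits.

(** * Real series with finitely many nonzero terms *)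

Fixpoint sN (u : nat -> R) (N : nat) : R :=
  match N with O => 0 | S m => sN u m + u m end.

Lemma sum_f_R0_sN u n : sum_f_R0 u n = sN u (S n).
Proof. induction n; simpl in *. ring. rewrite IHn. ring. Qed.

Lemma sN_stable u N : (forall k, (N <= k)%nat -> u k = 0) ->
  forall m, sN u (N + m) = sN u N.
Proof.
  intros H m; induction m. now rewrite Nat.add_0_r.
  rewrite Nat.add_succ_r; simpl. rewrite IHm, H by lia. ring.
Qed.

Lemma is_series_finite u N : (forall k, (N <= k)%nat -> u k = 0) -> is_series u (sN u N).
Proof.
  intro H; apply is_series_Reals. intros eps Heps. exists N. intros n Hn.
  rewrite sum_f_R0_sN. replace (S n) with (N + (S n - N))%nat by lia.
  rewrite sN_stable by auto. unfold R_dist. rewrite Rminus_diag, Rabs_R0. lra.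
Qed.

Lemma is_series_single u j : (forall k, k <> j -> u k = 0) -> is_series u (u j).
Proof.
  intro H.
  assert (Hj : sN u (S j) = u j).
  { assert (Hbefore : forall m, (m <= j)%nat -> sN u m = 0).
    { induction m; intros; simpl. auto. rewrite IHm by lia. rewrite H by lia. ring. }
    simpl. rewrite Hbefore by lia. ring. }
  rewrite <- Hj. apply is_series_finite. intros; apply H; lia.
Qed.

Lemma Series_single u j : (forall k, k <> j -> u k = 0) -> Series u = u j.
Proof. intro H. apply is_series_unique, is_series_single, H. Qed.

Lemma ex_series_nonneg_le (a b : nat -> R) :
  (forall k, 0 <= a k <= b k) -> ex_series b -> ex_series a.
Proof.
  intros H Hb. apply (ex_series_le (K:=R_AbsRing) (V:=R_CompleteNormedModule) a b); auto.
  intro k. change (norm (a k)) with (Rabs (a k)). rewrite Rabs_right. apply H. apply Rle_ge, H.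
Qed.

Lemma ex_series_Rscal (c : R) (a : nat -> R) : ex_series a -> ex_series (fun n => c * a n).
Proof.
  intro H. assert (E : forall n, a n * c = c * a n) by (intro; ring).
  apply (ex_series_ext _ _ E). apply ex_series_scal_r; auto.
Qed.

(** * Square-summable sequences *)

Definition Q (x : V) : R := Series (fun k => Cnorm2 (x k)).

Lemma is_l2_ex x : is_l2 x <-> ex_series (fun k => Cnorm2 (x k)).
Proof. split; intros [l Hl]; exists l; apply is_series_Reals; auto. Qed.

Lemma Q_ge0 x : is_l2 x -> 0 <= Q x.
Proof.
  intro H; apply is_l2_ex in H. unfold Q.
  rewrite <- (Series_single (fun _ => 0) O) by auto.
  apply Series_le; auto. intros; split. lra. apply Cnorm2_ge0.
Qed.

Lemma l2norm_sqrt x : is_l2 x -> l2norm x = sqrt (Q x).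
Proof.
  intro H. unfold l2norm. f_equal.
  pose proof (epsilon_spec (inhabits 0) (fun l => infinite_sum (fun n => Cnorm2 (x n)) l) H) as E.
  simpl in E. unfold Q. symmetry. apply is_series_unique. apply is_series_Reals. exact E.
Qed.

Lemma l2norm_ge0 x : 0 <= l2norm x.
Proof. unfold l2norm; apply sqrt_pos. Qed.

Lemma l2norm_sq x : is_l2 x -> (l2norm x)^2 = Q x.
Proof. intro H; rewrite l2norm_sqrt by auto. apply pow2_sqrt, Q_ge0, H. Qed.

Lemma ball_Q x : ball x <-> is_l2 x /\ Q x < 1.
Proof.
  split; intros [H1 H2]; split; auto.
  - rewrite l2norm_sqrt in H2 by auto. pose proof (Q_ge0 x H1).
    destruct (Rlt_le_dec (Q x) 1); auto. apply sqrt_le_1_alt in r. rewrite sqrt_1 in r. lra.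
  - rewrite l2norm_sqrt by auto. rewrite <- sqrt_1. apply sqrt_lt_1_alt. split; auto.
    apply Q_ge0; auto.
Qed.

Lemma Q_cmp x y : is_l2 x -> (forall k, Cnorm2 (y k) <= Cnorm2 (x k)) -> is_l2 y /\ Q y <= Q x.
Proof.
  intros Hx H. apply is_l2_ex in Hx.
  assert (Hy : ex_series (fun k => Cnorm2 (y k))).
  { apply (ex_series_nonneg_le _ _ (fun k => conj (Cnorm2_ge0 _) (H k)) Hx). }
  split. apply is_l2_ex; auto. unfold Q. apply Series_le; auto.
  intro k; split; auto. apply Cnorm2_ge0.
Qed.

Lemma l2norm_cmp x y : is_l2 x -> (forall k, Cnorm2 (y k) <= Cnorm2 (x k)) ->
  is_l2 y /\ l2norm y <= l2norm x.
Proof.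
  intros Hx H. destruct (Q_cmp x y Hx H) as [Hy HQ]. split; auto.
  rewrite !l2norm_sqrt by auto. apply sqrt_le_1_alt; auto.
Qed.

Lemma l2_single x j : (forall k, k <> j -> Cnorm2 (x k) = 0) -> is_l2 x /\ Q x = Cnorm2 (x j).
Proof.
  intro H. pose proof (is_series_single _ j H) as Hs. split.
  - apply is_l2_ex. exists (Cnorm2 (x j)); auto.
  - unfold Q. apply is_series_unique; auto.
Qed.

Lemma coord_le_Q x j : is_l2 x -> Cnorm2 (x j) <= Q x.
Proof.
  intro Hx. set (y := fun k => if Nat.eq_dec k j then x j else C0).
  destruct (l2_single y j) as [_ Hy].
  { intros k Hk. unfold y. destruct (Nat.eq_dec k j); [tauto|]. unfold Cnorm2; simpl; ring. }
  unfold y in Hy at 2. destruct (Nat.eq_dec j j); [|tauto]. rewrite <- Hy.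
  apply Q_cmp; auto. intro k. unfold y. destruct (Nat.eq_dec k j).
  - subst; lra.
  - unfold Cnorm2 at 1; simpl. replace (0 * 0 + 0 * 0) with 0 by ring. apply Cnorm2_ge0.
Qed.

Lemma coord_le_norm x j : is_l2 x -> Cmod (toC (x j)) <= l2norm x.
Proof.
  intro Hx. rewrite l2norm_sqrt by auto.
  rewrite <- (sqrt_pow2 (Cmod (toC (x j)))) by apply Cmod_ge_0.
  apply sqrt_le_1_alt. rewrite <- Cnorm2_C. apply coord_le_Q; auto.
Qed.

Lemma vscal_l2 c x : is_l2 x -> is_l2 (vscal c x).
Proof.
  intro H. apply is_l2_ex in H. apply is_l2_ex.
  apply (ex_series_ext (fun k => Cnorm2 c * Cnorm2 (x k))).
  - intro k. unfold vscal, Cnorm2, Cmul; simpl; ring.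
  - apply ex_series_Rscal; auto.
Qed.

Definition tail (x : V) : V := fun k => x (S k).

Lemma tail_l2 x : is_l2 x -> is_l2 (tail x).
Proof.
  intro H; apply is_l2_ex in H; apply is_l2_ex. unfold tail.
  apply (ex_series_incr_1 (fun k => Cnorm2 (x k))). auto.
Qed.

Lemma l2_of_tail x : is_l2 (tail x) -> is_l2 x.
Proof.
  intro H; apply is_l2_ex in H; apply is_l2_ex. unfold tail in H.
  apply (ex_series_incr_1 (fun k => Cnorm2 (x k))). auto.
Qed.

Lemma Q_tail x : is_l2 x -> Q x = Cnorm2 (x O) + Q (tail x).
Proof. intro H; apply is_l2_ex in H. unfold Q, tail. apply Series_incr_1; auto. Qed.

(** * Complex series dominated by a summable real series *)

Definition Cseries (u : nat -> C) : C :=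
  (Series (fun k => fst (u k)), Series (fun k => snd (u k))).

Definition dominated (u : nat -> C) (b : nat -> R) : Prop :=
  ex_series b /\ forall k, Cmod (u k) <= b k.

Lemma dominated_fst u b : dominated u b ->
  ex_series (fun k => Rabs (fst (u k))) /\ ex_series (fun k => fst (u k)).
Proof.
  intros [Hb H]. assert (H1 : ex_series (fun k => Rabs (fst (u k)))).
  { apply (ex_series_nonneg_le _ b); auto. intro k; split. apply Rabs_pos.
    eapply Rle_trans. apply fst_le_Cmod. auto. }
  split; auto.
  apply (ex_series_le (K:=R_AbsRing) (V:=R_CompleteNormedModule) _ _ (fun k => Rle_refl _) H1).
Qed.

Lemma dominated_snd u b : dominated u b ->
  ex_series (fun k => Rabs (snd (u k))) /\ ex_series (fun k => snd (u k)).
Proof.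
  intros [Hb H]. assert (H1 : ex_series (fun k => Rabs (snd (u k)))).
  { apply (ex_series_nonneg_le _ b); auto. intro k; split. apply Rabs_pos.
    eapply Rle_trans. apply snd_le_Cmod. auto. }
  split; auto.
  apply (ex_series_le (K:=R_AbsRing) (V:=R_CompleteNormedModule) _ _ (fun k => Rle_refl _) H1).
Qed.

Lemma dominated_plus u v b1 b2 : dominated u b1 -> dominated v b2 ->
  dominated (fun k => u k + v k)%C (fun k => b1 k + b2 k).
Proof.
  intros [H1 H2] [H3 H4]. split.
  - apply (ex_series_plus (K:=R_AbsRing) (V:=R_NormedModule)); auto.
  - intro k. apply Cmod_le_add; auto.
Qed.

Lemma dominated_scal c u b : dominated u b -> dominated (fun k => c * u k)%C (fun k => Cmod c * b k).
Proof.
  intros [H1 H2]. split. apply ex_series_Rscal; auto.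
  intro k. rewrite Cmod_mult. apply Rmult_le_compat_l; auto. apply Cmod_ge_0.
Qed.

Lemma Cseries_ext u v : (forall k, u k = v k) -> Cseries u = Cseries v.
Proof. intro H; unfold Cseries; f_equal; apply Series_ext; intro k; rewrite H; auto. Qed.

Lemma Cseries_plus u v b1 b2 : dominated u b1 -> dominated v b2 ->
  Cseries (fun k => u k + v k)%C = (Cseries u + Cseries v)%C.
Proof.
  intros Hu Hv.
  destruct (dominated_fst _ _ Hu), (dominated_fst _ _ Hv),
    (dominated_snd _ _ Hu), (dominated_snd _ _ Hv).
  unfold Cseries, Cplus; cbv [fst snd]. f_equal.
  - rewrite <- Series_plus by auto. apply Series_ext; intro; reflexivity.
  - rewrite <- Series_plus by auto. apply Series_ext; intro; reflexivity.
Qed.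

Lemma Cseries_scal c u b : dominated u b -> Cseries (fun k => c * u k)%C = (c * Cseries u)%C.
Proof.
  intros Hu. destruct (dominated_fst _ _ Hu), (dominated_snd _ _ Hu).
  destruct c as [c1 c2]. unfold Cseries. apply injective_projections; simpl.
  - rewrite <- !Series_scal_l, <- Series_minus.
    + apply Series_ext; intro; reflexivity.
    + apply ex_series_Rscal; auto.
    + apply ex_series_Rscal; auto.
  - rewrite <- !Series_scal_l, <- Series_plus.
    + apply Series_ext; intro; reflexivity.
    + apply ex_series_Rscal; auto.
    + apply ex_series_Rscal; auto.
Qed.

Lemma Cseries_bound u b : dominated u b -> Cmod (Cseries u) <= 2 * Series b.
Proof.
  intros Hu. destruct (dominated_fst _ _ Hu) as [F1 F2], (dominated_snd _ _ Hu) as [S1 S2].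
  destruct Hu as [Hb H].
  eapply Rle_trans. apply Cmod_le_parts. unfold Cseries; simpl.
  pose proof (Series_Rabs _ F1). pose proof (Series_Rabs _ S1).
  assert (Series (fun k => Rabs (fst (u k))) <= Series b).
  { apply Series_le; auto. intro k; split. apply Rabs_pos.
    eapply Rle_trans. apply fst_le_Cmod. auto. }
  assert (Series (fun k => Rabs (snd (u k))) <= Series b).
  { apply Series_le; auto. intro k; split. apply Rabs_pos.
    eapply Rle_trans. apply snd_le_Cmod. auto. }
  lra.
Qed.

Lemma Cseries_fst_le u b : dominated u b -> fst (Cseries u) <= Series b.
Proof.
  intros Hu. destruct (dominated_fst _ _ Hu) as [F1 F2]. destruct Hu as [Hb H].
  unfold Cseries; simpl. eapply Rle_trans. apply Rle_abs.
  eapply Rle_trans. apply Series_Rabs; auto.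
  apply Series_le; auto. intro k; split. apply Rabs_pos.
  eapply Rle_trans. apply fst_le_Cmod. auto.
Qed.

(** * The bilinear form on the tail coordinates *)

Definition tailB (a h : V) : C := Cseries (fun k => toC (a (S k)) * toC (h (S k)))%C.

Lemma amgm_weighted (X H t : R) : 0 < t -> 0 <= X -> 0 <= H -> X * H <= (t * X^2 + H^2 / t) / 2.
Proof.
  intros Ht HX HH.
  assert (0 <= (t * X - H)^2) by apply pow2_ge_0.
  assert (t * (X * H) <= t * ((t * X^2 + H^2 / t) / 2)).
  { replace (t * ((t * X^2 + H^2 / t) / 2)) with ((t*t*X^2 + H^2)/2) by (field; lra).
    assert (E : (t*t*X^2 + H^2)/2 - t * (X * H) = (t * X - H)^2/2) by field. lra. }
  apply Rmult_le_reg_l with t; auto.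
Qed.

Lemma dominated_tailB a h t : is_l2 a -> is_l2 h -> 0 < t ->
  dominated (fun k => toC (a (S k)) * toC (h (S k)))%C
            (fun k => (t * Cnorm2 (a (S k)) + Cnorm2 (h (S k)) / t) / 2).
Proof.
  intros Ha Hh Ht. apply tail_l2, is_l2_ex in Ha. apply tail_l2, is_l2_ex in Hh.
  unfold tail in *. split.
  - apply ex_series_scal_r. apply (ex_series_plus (K:=R_AbsRing) (V:=R_NormedModule)).
    + apply ex_series_Rscal; auto.
    + apply ex_series_scal_r; auto.
  - intro k. rewrite Cmod_mult, !Cnorm2_C. apply amgm_weighted; auto; apply Cmod_ge_0.
Qed.

Lemma tailB_bound_t a h t : is_l2 a -> is_l2 h -> 0 < t ->
  Cmod (tailB a h) <= t * Q a + Q h / t.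
Proof.
  intros Ha Hh Ht. eapply Rle_trans. apply Cseries_bound, (dominated_tailB a h t); auto.
  pose proof (tail_l2 _ Ha) as Ha'. pose proof (tail_l2 _ Hh) as Hh'.
  apply is_l2_ex in Ha'. apply is_l2_ex in Hh'. unfold tail in *.
  rewrite (Series_ext _ (fun k => /2 * (t * Cnorm2 (a (S k)) + /t * Cnorm2 (h (S k))))).
  2: intro; field; lra.
  rewrite Series_scal_l, Series_plus, !Series_scal_l.
  2: apply ex_series_Rscal; auto. 2: apply ex_series_Rscal; auto.
  rewrite (Q_tail a), (Q_tail h) by auto. unfold Q, tail.
  pose proof (Cnorm2_ge0 (a O)). pose proof (Cnorm2_ge0 (h O)).
  set (A := Series (fun k => Cnorm2 (a (S k)))).
  set (B := Series (fun k => Cnorm2 (h (S k)))).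
  assert (0 < /t) by (apply Rinv_0_lt_compat; lra).
  unfold Rdiv. nra.
Qed.

Lemma tailB_bound a h : is_l2 a -> is_l2 h -> Q a <= 1 -> Cmod (tailB a h) <= 2 * l2norm h.
Proof.
  intros Ha Hh HQ. pose proof (l2norm_sq h Hh) as Hr. pose proof (l2norm_ge0 h).
  pose proof (Q_ge0 a Ha).
  destruct (Rlt_le_dec 0 (l2norm h)) as [Hp|Hp].
  - eapply Rle_trans. apply (tailB_bound_t a h (l2norm h)); auto.
    rewrite <- Hr. replace (l2norm h ^ 2 / l2norm h) with (l2norm h) by (field; lra).
    nra.
  - assert (Hz : l2norm h = 0) by lra. rewrite Hz in Hr |- *. simpl in Hr.
    destruct (Rle_dec (Cmod (tailB a h)) 0) as [|Hn]; [lra|].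
    exfalso. assert (Hg : 0 < Cmod (tailB a h) / 2) by lra.
    pose proof (tailB_bound_t a h _ Ha Hh Hg) as Ht. rewrite <- Hr in Ht.
    assert (Q a * (Cmod (tailB a h) / 2) <= Cmod (tailB a h) / 2) by nra.
    unfold Rdiv in Ht at 2. rewrite Rmult_0_l in Ht. lra.
Qed.

Lemma tailB_self_bound x : is_l2 x -> Cmod (tailB x x) <= 2 * Q x.
Proof.
  intro Hx. eapply Rle_trans. apply (tailB_bound_t x x 1); auto; lra.
  unfold Rdiv; rewrite Rinv_1; lra.
Qed.

(* Re B(x, x) <= ||x||^2 - |x_0|^2: the key to the bound |f| <= 1. *)
Lemma tailB_re_le x : is_l2 x -> fst (tailB x x) <= Q x - Cnorm2 (x O).
Proof.
  intro Hx. rewrite (Q_tail x) by auto. unfold tailB.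
  eapply Rle_trans. apply (Cseries_fst_le _ (fun k => Cnorm2 (x (S k)))).
  - split.
    + pose proof (tail_l2 _ Hx) as H. apply is_l2_ex in H. exact H.
    + intro k. rewrite Cmod_mult, Cnorm2_C. simpl; lra.
  - unfold Q, tail. lra.
Qed.

Lemma tailB_add a x y : is_l2 a -> is_l2 x -> is_l2 y ->
  tailB a (vadd x y) = (tailB a x + tailB a y)%C.
Proof.
  intros Ha Hx Hy. unfold tailB.
  rewrite <- (Cseries_plus _ _ _ _ (dominated_tailB a x 1 Ha Hx Rlt_0_1)
                                   (dominated_tailB a y 1 Ha Hy Rlt_0_1)).
  apply Cseries_ext; intro k. unfold vadd. rewrite toC_add. ring.
Qed.

Lemma tailB_scal a c x : is_l2 a -> is_l2 x -> tailB a (vscal c x) = (toC c * tailB a x)%C.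
Proof.
  intros Ha Hx. unfold tailB.
  rewrite <- (Cseries_scal _ _ _ (dominated_tailB a x 1 Ha Hx Rlt_0_1)).
  apply Cseries_ext; intro k. unfold vscal. rewrite toC_mul. ring.
Qed.

Lemma tailB_expand a h : is_l2 a -> is_l2 h ->
  tailB (vadd a h) (vadd a h) = (tailB a a + 2 * tailB a h + tailB h h)%C.
Proof.
  intros Ha Hh.
  pose proof (dominated_tailB a a 1 Ha Ha Rlt_0_1) as D1.
  pose proof (dominated_tailB a h 1 Ha Hh Rlt_0_1) as D2.
  pose proof (dominated_tailB h h 1 Hh Hh Rlt_0_1) as D3.
  unfold tailB.
  rewrite <- (Cseries_scal _ _ _ D2).
  rewrite <- (Cseries_plus _ _ _ _ D1 (dominated_scal 2 _ _ D2)).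
  rewrite <- (Cseries_plus _ _ _ _ (dominated_plus _ _ _ _ D1 (dominated_scal 2 _ _ D2)) D3).
  apply Cseries_ext; intro k. unfold vadd. rewrite !toC_add. ring.
Qed.

(** * The function f(x) = x_0^2 / (1 - B(x, x)) *)

Definition f_C (x : V) : C := ((toC (x O) * toC (x O)) / (1 - tailB x x))%C.
Definition f_ex (x : V) : Cplx := ofC (f_C x).

(* |1 - B(x, x)| >= Re (1 - B(x, x)) >= 1 - ||x||^2 + |x_0|^2. *)
Lemma denominator_lower x : is_l2 x -> 1 - Q x + Cnorm2 (x O) <= Cmod (1 - tailB x x)%C.
Proof.
  intro Hx. pose proof (tailB_re_le x Hx).
  eapply Rle_trans. 2: apply fst_le_Cmod. eapply Rle_trans. 2: apply Rle_abs.
  replace (fst (1 - tailB x x)%C) with (1 - fst (tailB x x)) by (simpl; ring). lra.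
Qed.

Lemma f_bound x : ball x -> Cmod (f_C x) <= 1.
Proof.
  intro Hb. apply ball_Q in Hb as [Hx HQ]. pose proof (denominator_lower x Hx).
  pose proof (Cnorm2_ge0 (x O)).
  assert (Hne : (1 - tailB x x)%C <> 0%C).
  { intro E. rewrite E, Cmod_0 in H. lra. }
  unfold f_C. rewrite Cmod_div by auto. rewrite Cmod_mult.
  replace (Cmod (toC (x O)) * Cmod (toC (x O))) with (Cnorm2 (x O)) by (rewrite Cnorm2_C; ring).
  apply Rmult_le_reg_r with (Cmod (1 - tailB x x)%C). lra.
  unfold Rdiv. rewrite Rmult_assoc, Rinv_l by lra. lra.
Qed.

Definition f_deriv (a h : V) : C :=
  let D := (1 - tailB a a)%C in
  ((2 * toC (a O) * toC (h O) * D + 2 * (toC (a O) * toC (a O)) * tailB a h) / (D * D))%C.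

(* With D the denominator at a, G = B(a, h), gh = B(h, h), the remainder of
   the first-order expansion of f at a is a single fraction. *)
Lemma remainder_identity (a0 h0 D G gh : C) : D <> 0%C -> (D - 2*G - gh)%C <> 0%C ->
  ((a0+h0)*(a0+h0) / (D - 2*G - gh) - ((a0*a0)/D + (2*a0*h0*D + 2*(a0*a0)*G)/(D*D)))%C
  = ((D*D*(h0*h0) + (a0*a0)*D*gh + (2*a0*h0*D + 2*(a0*a0)*G)*(2*G+gh)) / (D*D*(D - 2*G - gh)))%C.
Proof. intros. field. auto. Qed.

Lemma perturbed_denominator (D G gh : C) r m : 0 < m -> 0 <= r -> r <= 1 -> r <= m / 12 ->
  m <= Cmod D -> Cmod G <= 2 * r -> Cmod gh <= 2 * r^2 ->
  m / 2 <= Cmod (D - 2*G - gh).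
Proof.
  intros. pose proof (Cmod_sub_lower D (2*G + gh)%C).
  replace (D - (2*G + gh))%C with (D - 2*G - gh)%C in H6 by ring.
  assert (Cmod (2*G + gh)%C <= 2 * (2*r) + 2*r^2).
  { apply Cmod_le_add; auto. apply Cmod_le_mult; auto. rewrite Cmod_2; lra. }
  assert (r^2 <= r) by (simpl; nra).
  lra.
Qed.

Lemma remainder_estimate (a0 h0 D G gh : C) r m : 0 < m -> 0 <= r -> r <= 1 -> r <= m / 12 ->
  Cmod a0 <= 1 -> Cmod h0 <= r -> m <= Cmod D -> Cmod D <= 3 ->
  Cmod G <= 2 * r -> Cmod gh <= 2 * r^2 ->
  Cmod ((D*D*(h0*h0) + (a0*a0)*D*gh + (2*a0*h0*D + 2*(a0*a0)*G)*(2*G+gh))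
        / (D*D*(D - 2*G - gh)))%C
   <= 150 * r^2 / m^3.
Proof.
  intros Hm Hr0 Hr1 Hrm Ha0 Hh0 HD1 HD2 HG Hgh.
  pose proof (perturbed_denominator D G gh r m Hm Hr0 Hr1 Hrm HD1 HG Hgh) as HD'.
  assert (HDD : 0 < Cmod (D*D*(D - 2*G - gh))%C).
  { rewrite !Cmod_mult. apply Rmult_lt_0_compat. apply Rmult_lt_0_compat; lra. lra. }
  assert (Hne : (D*D*(D - 2*G - gh))%C <> 0%C).
  { intro E. rewrite E, Cmod_0 in HDD. lra. }
  rewrite Cmod_div by auto.
  assert (Hnum : Cmod (D*D*(h0*h0) + (a0*a0)*D*gh + (2*a0*h0*D + 2*(a0*a0)*G)*(2*G+gh))%C
          <= (3*3*(r*r) + 1*1*3*(2*r^2)) + (2*1*r*3 + 2*(1*1)*(2*r))*(2*(2*r) + 2*r^2)).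
  { pose proof (Cmod_ge_0 a0). pose proof (Cmod_ge_0 D).
    repeat first [ apply Cmod_le_add | apply Cmod_le_mult ]; auto;
      try (rewrite Cmod_2; lra). }
  rewrite !Cmod_mult.
  assert (Hden : m * m * (m/2) <= Cmod D * Cmod D * Cmod (D - 2*G - gh)%C).
  { apply Rmult_le_compat; try lra. apply Rmult_le_pos; lra. apply Rmult_le_compat; lra. }
  assert (Hnum' : Cmod (D*D*(h0*h0) + (a0*a0)*D*gh + (2*a0*h0*D + 2*(a0*a0)*G)*(2*G+gh))%C
                  <= 75 * r^2).
  { eapply Rle_trans. exact Hnum. assert (r^2 <= r) by (simpl; nra). simpl. nra. }
  apply Rle_trans with (75 * r^2 / (m * m * (m / 2))).
  - unfold Rdiv. apply Rmult_le_compat. apply Cmod_ge_0.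
    + left; apply Rinv_0_lt_compat. apply Rmult_lt_0_compat. apply Rmult_lt_0_compat; lra. lra.
    + auto.
    + apply Rinv_le_contravar; auto.
      apply Rmult_lt_0_compat. apply Rmult_lt_0_compat; lra. lra.
  - right. field. lra.
Qed.

Lemma base_point_bounds a : ball a ->
  0 < 1 - Q a /\ 1 - Q a <= Cmod (1 - tailB a a)%C /\ Cmod (1 - tailB a a)%C <= 3 /\
  Cmod (toC (a O)) <= 1.
Proof.
  intro Ha. apply ball_Q in Ha as [Ha HQa]. pose proof (Q_ge0 a Ha).
  split; [lra|split; [|split]].
  - pose proof (denominator_lower a Ha). pose proof (Cnorm2_ge0 (a O)). lra.
  - replace 3 with (1 + 2 * 1) by ring. apply Cmod_le_sub.
    + rewrite Cmod_1; lra.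
    + pose proof (tailB_self_bound a Ha). lra.
  - apply Cmod_sq_le1. rewrite <- Cnorm2_C. pose proof (coord_le_Q a O Ha). lra.
Qed.

Lemma f_deriv_linear a : ball a -> bounded_linear_functional (fun h => ofC (f_deriv a h)).
Proof.
  intro Hball. destruct (base_point_bounds a Hball) as [Hm [HD [HD3 HA0]]].
  apply ball_Q in Hball as [Ha HQa]. unfold f_deriv.
  set (D := (1 - tailB a a)%C) in *. set (m := 1 - Q a) in *.
  assert (HD0 : D <> 0%C) by (intro E; rewrite E, Cmod_0 in HD; lra).
  split; [|split].
  - intros x y Hx Hy. apply toC_inj. rewrite toC_add, !toC_ofC.
    change (toC (vadd x y O)) with (toC (x O) + toC (y O))%C.
    rewrite tailB_add by auto. field. auto.
  - intros c x Hx. apply toC_inj. rewrite toC_mul, !toC_ofC.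
    change (toC (vscal c x O)) with (toC c * toC (x O))%C.
    rewrite tailB_scal by auto. field. auto.
  - exists (10 / (m * m)). intros h Hh. rewrite Cabs_C, toC_ofC.
    assert (HDD : (D * D)%C <> 0%C).
    { intro E. apply (f_equal Cmod) in E. rewrite Cmod_mult, Cmod_0 in E.
      assert (0 < Cmod D * Cmod D) by (apply Rmult_lt_0_compat; lra). lra. }
    rewrite Cmod_div, Cmod_mult by auto.
    pose proof (l2norm_ge0 h). pose proof (coord_le_norm h O Hh).
    pose proof (tailB_bound a h Ha Hh ltac:(lra)). pose proof (Cmod_ge_0 (toC (a O))).
    assert (Hn : Cmod (2 * toC (a O) * toC (h O) * D + 2 * (toC (a O) * toC (a O)) * tailB a h)%C
                 <= 2 * 1 * l2norm h * 3 + 2 * (1 * 1) * (2 * l2norm h)).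
    { repeat first [ assumption | (rewrite Cmod_2; lra) | apply Cmod_le_add | apply Cmod_le_mult ]. }
    apply Rle_trans with (10 * l2norm h / (m * m)).
    + unfold Rdiv. apply Rmult_le_compat. apply Cmod_ge_0.
      * left; apply Rinv_0_lt_compat. apply Rmult_lt_0_compat; lra.
      * lra.
      * apply Rinv_le_contravar. apply Rmult_lt_0_compat; lra. apply Rmult_le_compat; lra.
    + right. field. lra.
Qed.

Lemma f_remainder a h : ball a -> is_l2 h -> is_l2 (vadd a h) ->
  l2norm h <= 1 -> l2norm h <= (1 - Q a) / 12 ->
  Cmod (f_C (vadd a h) - (f_C a + f_deriv a h))%C <= 150 * (l2norm h)^2 / (1 - Q a)^3.
Proof.
  intros Hball Hh Hah Hr1 Hrm.
  destruct (base_point_bounds a Hball) as [Hm [HD [HD3 HA0]]].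
  apply ball_Q in Hball as [Ha HQa].
  set (r := l2norm h) in *. set (m := 1 - Q a) in *.
  pose proof (l2norm_ge0 h) as Hr0. fold r in Hr0.
  pose proof (l2norm_sq h Hh) as HQh. fold r in HQh.
  pose proof (tailB_bound a h Ha Hh ltac:(lra)) as HG. fold r in HG.
  pose proof (tailB_self_bound h Hh) as Hgh. rewrite <- HQh in Hgh.
  pose proof (coord_le_norm h O Hh) as Hh0. fold r in Hh0.
  unfold f_C, f_deriv.
  change (toC (vadd a h O)) with (toC (a O) + toC (h O))%C.
  rewrite tailB_expand by auto.
  set (D := (1 - tailB a a)%C) in *.
  replace (1 - (tailB a a + 2 * tailB a h + tailB h h))%C
    with (D - 2 * tailB a h - tailB h h)%C by (unfold D; ring).
  assert (HD0 : D <> 0%C) by (intro E; rewrite E, Cmod_0 in HD; lra).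
  assert (HD' : (D - 2 * tailB a h - tailB h h)%C <> 0%C).
  { pose proof (perturbed_denominator D (tailB a h) (tailB h h) r m Hm Hr0 Hr1 Hrm HD HG
                  ltac:(lra)) as Hlow.
    intro E. rewrite E, Cmod_0 in Hlow. lra. }
  rewrite remainder_identity by auto.
  apply (remainder_estimate _ _ _ _ _ r m); auto; lra.
Qed.

Lemma f_holomorphic : holomorphic_on_ball f_ex.
Proof.
  intros a Ha. exists (fun h => ofC (f_deriv a h)). split; [apply f_deriv_linear; auto|].
  destruct (base_point_bounds a Ha) as [Hm _]. set (m := 1 - Q a) in *.
  intros eps Heps.
  assert (Hm3 : 0 < m ^ 3) by (apply pow_lt; lra).
  set (delta := Rmin 1 (Rmin (m / 12) (eps * m ^ 3 / 150))).
  assert (Hd1 : delta <= 1) by apply Rmin_l.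
  assert (Hd2 : delta <= m / 12) by (eapply Rle_trans; [apply Rmin_r|apply Rmin_l]).
  assert (Hd3 : delta <= eps * m ^ 3 / 150) by (eapply Rle_trans; [apply Rmin_r|apply Rmin_r]).
  exists delta. split.
  { apply Rmin_pos. lra. apply Rmin_pos. lra. apply Rdiv_lt_0_compat; [nra|lra]. }
  intros h Hh Hr Hball. apply ball_Q in Hball as [Hah _].
  pose proof (l2norm_ge0 h).
  rewrite Cabs_C, toC_sub, toC_add, !toC_ofC. unfold f_ex. rewrite !toC_ofC.
  eapply Rle_trans. apply f_remainder; auto; fold m; lra.
  fold m. apply Rmult_le_reg_r with (m ^ 3); auto.
  replace (150 * l2norm h ^ 2 / m ^ 3 * m ^ 3) with (l2norm h * (150 * l2norm h)) by (field; lra).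
  assert (150 * l2norm h <= eps * m ^ 3) by (unfold Rdiv in Hd3; lra).
  nra.
Qed.

Lemma f_Hinf : Hinf f_ex.
Proof.
  split. apply f_holomorphic. exists 1. intros x Hx. rewrite Cabs_C. unfold f_ex.
  rewrite toC_ofC. apply f_bound; auto.
Qed.

(** * The rank-one projection S and P = I - S *)

Definition e (j : nat) : V := fun k => if Nat.eqb k j then mkC 1 0 else C0.

(* S x = x_0 e_0, written as a one-term linear combination. *)
Definition S0 (x : V) : V := fun k => Cadd C0 (Cmul (x O) (e O k)).
Definition P0 (x : V) : V := vsub x (S0 x).

Lemma Cnorm2_e j k : Cnorm2 (e j k) = if Nat.eqb k j then 1 else 0.
Proof. unfold e. destruct (Nat.eqb k j); unfold Cnorm2; simpl; ring. Qed.

Lemma e_l2 j : is_l2 (e j) /\ Q (e j) = 1.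
Proof.
  destruct (l2_single (e j) j) as [H1 H2].
  - intros k Hk. rewrite Cnorm2_e. apply Nat.eqb_neq in Hk. rewrite Hk; auto.
  - split; auto. rewrite H2, Cnorm2_e, Nat.eqb_refl. auto.
Qed.

Lemma Cnorm2_S0 x k : Cnorm2 (S0 x k) = if Nat.eqb k O then Cnorm2 (x O) else 0.
Proof. unfold S0, e. destruct (Nat.eqb k O); unfold Cnorm2; simpl; ring. Qed.

Lemma Cnorm2_P0 x k : Cnorm2 (P0 x k) = if Nat.eqb k O then 0 else Cnorm2 (x k).
Proof. unfold P0, vsub, S0, e. destruct k; simpl; unfold Cnorm2; simpl; ring. Qed.

Lemma S0_le x k : Cnorm2 (S0 x k) <= Cnorm2 (x k).
Proof. rewrite Cnorm2_S0. destruct k; simpl. lra. apply Cnorm2_ge0. Qed.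

Lemma P0_le x k : Cnorm2 (P0 x k) <= Cnorm2 (x k).
Proof. rewrite Cnorm2_P0. destruct k; simpl. apply Cnorm2_ge0. lra. Qed.

Lemma S0_finite_rank : finite_rank_operator S0.
Proof.
  split; [split; [|split; [|split]]|].
  - intros x Hx. apply (l2norm_cmp x); auto. apply S0_le.
  - intros x y _ _. extensionality k. unfold S0, vadd. cplx_ring.
  - intros c x _. extensionality k. unfold S0, vscal. cplx_ring.
  - exists 1. intros x Hx. rewrite Rmult_1_l. apply (l2norm_cmp x); auto. apply S0_le.
  - exists 1%nat, (fun _ => e O). split.
    + intros; apply e_l2.
    + intros x _. exists (fun _ => x O). reflexivity.
Qed.

(* ||P|| = 1: P is a coordinate restriction, and it fixes e_1. *)
Lemma P0_opnorm : opnorm_is (fun x => vsub x (S0 x)) 1.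
Proof.
  split.
  - intros s [x [Hx [Hn ->]]]. fold (P0 x).
    destruct (l2norm_cmp x (P0 x) Hx (P0_le x)). lra.
  - intros b Hb. apply Hb. exists (e 1%nat). destruct (e_l2 1%nat) as [H1 H2].
    split; auto. rewrite l2norm_sqrt, H2, sqrt_1 by auto. split. lra.
    fold (P0 (e 1%nat)).
    destruct (l2_single (P0 (e 1%nat)) 1%nat) as [H3 H4].
    { intros k Hk. rewrite Cnorm2_P0, Cnorm2_e. destruct k. reflexivity.
      destruct k. lia. reflexivity. }
    rewrite l2norm_sqrt, H4 by auto. rewrite Cnorm2_P0, Cnorm2_e. simpl. rewrite sqrt_1. auto.
Qed.

(* f vanishes on the range of P, since (P x)_0 = 0. *)
Lemma f_P0 x : f_ex (vsub x (S0 x)) = C0.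
Proof.
  unfold f_ex, f_C.
  assert (H : toC (vsub x (S0 x) O) = RtoC 0).
  { unfold vsub, S0, e. simpl. apply injective_projections; simpl; ring. }
  rewrite H. apply toC_inj. rewrite toC_ofC. apply injective_projections; simpl; ring.
Qed.

(** * Bounded linear functionals vanish at infinity along the basis *)

Definition trunc (c : nat -> Cplx) (N : nat) : V := fun k => if Nat.ltb k N then c k else C0.

Lemma trunc_0 c : trunc c O = vscal C0 (e O).
Proof. extensionality k. unfold trunc, vscal, e. simpl. cplx_ring. Qed.

Lemma trunc_S c N : trunc c (S N) = vadd (trunc c N) (vscal (c N) (e N)).
Proof.
  extensionality k. unfold trunc, vadd, vscal, e.
  destruct (Nat.lt_trichotomy k N) as [H|[H|H]].
  - rewrite (proj2 (Nat.ltb_lt k (S N))), (proj2 (Nat.ltb_lt k N)), (proj2 (Nat.eqb_neq k N))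
      by lia; cplx_ring.
  - subst. rewrite (proj2 (Nat.ltb_lt N (S N))), (proj2 (Nat.ltb_ge N N)), Nat.eqb_refl
      by lia; cplx_ring.
  - rewrite (proj2 (Nat.ltb_ge k (S N))), (proj2 (Nat.ltb_ge k N)), (proj2 (Nat.eqb_neq k N))
      by lia; cplx_ring.
Qed.

Lemma trunc_l2 c N : is_l2 (trunc c N) /\ Q (trunc c N) = sN (fun k => Cnorm2 (c k)) N.
Proof.
  assert (H : forall k, (N <= k)%nat -> Cnorm2 (trunc c N k) = 0).
  { intros k Hk. unfold trunc. apply Nat.ltb_ge in Hk. rewrite Hk. unfold Cnorm2; simpl; ring. }
  pose proof (is_series_finite _ _ H) as Hs. split.
  - apply is_l2_ex; eexists; eauto.
  - unfold Q. rewrite (is_series_unique _ _ Hs).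
    assert (Hagree : forall m, (m <= N)%nat ->
              sN (fun k => Cnorm2 (trunc c N k)) m = sN (fun k => Cnorm2 (c k)) m).
    { induction m; intros; simpl; auto. rewrite IHm by lia. unfold trunc.
      rewrite (proj2 (Nat.ltb_lt m N)) by lia. auto. }
    apply Hagree; lia.
Qed.

Lemma sN_ext u v N : (forall k, u k = v k) -> sN u N = sN v N.
Proof. intro H. induction N; simpl; auto. rewrite IHN, H. auto. Qed.

Lemma sN_nonneg u N : (forall k, 0 <= u k) -> 0 <= sN u N.
Proof. intro H. induction N; simpl. lra. pose proof (H N). lra. Qed.

Lemma le_sq_of_le_sqrt s M : 0 <= s -> s <= M * sqrt s -> s <= M * M.
Proof.
  intros Hs H. pose proof (sqrt_sqrt s Hs).
  destruct (Rle_lt_dec s 0). { pose proof (sqrt_pos s). nra. }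
  assert (0 < sqrt s) by (apply sqrt_lt_R0; auto).
  assert (sqrt s <= M) by (apply Rmult_le_reg_r with (sqrt s); nra).
  nra.
Qed.

(* Testing L against the truncations of (conj (L e_k))_k gives Bessel's
   inequality sum_(k < N) |L e_k|^2 <= ||L||^2. *)
Lemma blf_bessel L : bounded_linear_functional L ->
  exists M, forall N, sN (fun k => Cnorm2 (L (e k))) N <= M * M.
Proof.
  intros [Hadd [Hsc [M HM]]]. exists M. intro N.
  set (u := fun k => Cnorm2 (L (e k))).
  set (c := fun k => ofC (Cconj (toC (L (e k))))).
  assert (HL : forall N, toC (L (trunc c N)) = RtoC (sN u N)).
  { induction N0.
    - rewrite trunc_0, Hsc by apply e_l2. apply injective_projections; simpl; ring.
    - rewrite trunc_S, Hadd. 2: apply trunc_l2. 2: apply vscal_l2, e_l2.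
      rewrite Hsc by apply e_l2. rewrite toC_add, toC_mul, IHN0.
      unfold c, u. rewrite toC_ofC. simpl sN. rewrite Cnorm2_toC.
      apply injective_projections; simpl; ring. }
  assert (Hs0 : 0 <= sN u N) by (apply sN_nonneg; intro; apply Cnorm2_ge0).
  assert (Hcu : sN (fun k => Cnorm2 (c k)) N = sN u N).
  { apply sN_ext. intro k. unfold c, u.
    rewrite Cnorm2_toC, toC_ofC, (Cnorm2_toC (L (e k))). simpl. ring. }
  destruct (trunc_l2 c N) as [Hl HQ].
  pose proof (HM _ Hl) as HN.
  rewrite Cabs_C, HL, Cmod_R, Rabs_right, l2norm_sqrt, HQ, Hcu in HN by (auto; lra).
  apply le_sq_of_le_sqrt; auto.
Qed.

Lemma blf_basis_null L : bounded_linear_functional L ->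
  forall eps, 0 < eps -> exists N, forall k, (N <= k)%nat -> Cmod (toC (L (e k))) < eps.
Proof.
  intros HL eps Heps. destruct (blf_bessel L HL) as [M HM].
  set (u := fun k => Cnorm2 (L (e k))).
  assert (Hex : ex_series u).
  { destruct (growing_cv (sum_f_R0 u)) as [l Hl].
    - intro n. simpl. pose proof (Cnorm2_ge0 (L (e (S n)))). unfold u. lra.
    - exists (M * M). intros y [n ->]. rewrite sum_f_R0_sN. apply HM.
    - exists l. apply is_series_Reals. exact Hl. }
  apply ex_series_lim_0, is_lim_seq_spec in Hex.
  assert (He2 : 0 < eps * eps) by nra.
  destruct (Hex (mkposreal _ He2)) as [N HN]. exists N. intros k Hk.
  specialize (HN k Hk). simpl in HN.
  rewrite Rminus_0_r, Rabs_right in HN by (apply Rle_ge, Cnorm2_ge0).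
  unfold u in HN. rewrite Cnorm2_C in HN. pose proof (Cmod_ge_0 (toC (L (e k)))).
  simpl in HN. nra.
Qed.

(** * The test sequence z_n = a_n e_0 + b_n e_(n+1) *)

Definition t_ (n : nat) : R := / (INR n + 2).
Definition alpha (n : nat) : R := sqrt (t_ n / 2).
Definition beta (n : nat) : R := sqrt (1 - t_ n).
Definition z (n : nat) : V :=
  vadd (vscal (mkC (alpha n) 0) (e O)) (vscal (mkC (beta n) 0) (e (S n))).

Lemma t_bounds n : 0 < t_ n <= 1/2.
Proof.
  unfold t_. pose proof (pos_INR n). split. apply Rinv_0_lt_compat; lra.
  replace (1/2) with (/2) by field. apply Rinv_le_contravar; lra.
Qed.

Lemma alpha_sq n : alpha n * alpha n = t_ n / 2.
Proof. unfold alpha. apply sqrt_sqrt. pose proof (t_bounds n). lra. Qed.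

Lemma beta_sq n : beta n * beta n = 1 - t_ n.
Proof. unfold beta. apply sqrt_sqrt. pose proof (t_bounds n). lra. Qed.

Lemma beta_bounds n : 0 <= beta n <= 1.
Proof.
  pose proof (beta_sq n). pose proof (sqrt_pos (1 - t_ n)). fold (beta n) in H0.
  pose proof (t_bounds n). split; nra.
Qed.

Lemma alpha_null eps : 0 < eps -> exists N, forall n, (N <= n)%nat -> 0 <= alpha n < eps.
Proof.
  intro Heps. destruct (INR_unbounded (/ (eps * eps))) as [N HN].
  exists N. intros n Hn. pose proof (sqrt_pos (t_ n / 2)). fold (alpha n) in H.
  split; auto. pose proof (alpha_sq n) as Hsq. unfold t_ in Hsq.
  assert (HnN : INR N <= INR n) by (apply le_INR; lia). pose proof (pos_INR n).
  assert (Hlt : alpha n * alpha n < eps * eps).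
  { rewrite Hsq. assert (Hee : 0 < eps * eps) by nra.
    apply Rmult_lt_reg_r with (2 * (INR n + 2)); [lra|].
    replace (/ (INR n + 2) / 2 * (2 * (INR n + 2))) with 1 by (field; lra).
    apply Rmult_lt_reg_l with (/ (eps * eps)); [apply Rinv_0_lt_compat; lra|].
    rewrite Rmult_1_r. replace (/ (eps * eps) * (eps * eps * (2 * (INR n + 2))))
      with (2 * (INR n + 2)) by (field; lra). lra. }
  nra.
Qed.

Lemma z_coord0 n : toC (z n O) = RtoC (alpha n).
Proof. unfold z, vadd, vscal, e. simpl. apply injective_projections; simpl; ring. Qed.

Lemma z_coordS n k : toC (z n (S k)) = if Nat.eqb k n then RtoC (beta n) else RtoC 0.
Proof.
  unfold z, vadd, vscal, e. simpl.
  destruct (Nat.eqb k n); apply injective_projections; simpl; ring.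
Qed.

Lemma z_l2 n : is_l2 (z n) /\ Q (z n) = 1 - t_ n / 2.
Proof.
  destruct (l2_single (tail (z n)) n) as [H1 H2].
  { intros k Hk. unfold tail. rewrite Cnorm2_toC, z_coordS.
    apply Nat.eqb_neq in Hk. rewrite Hk. simpl; ring. }
  assert (Hz : is_l2 (z n)) by (apply l2_of_tail; auto).
  split; auto. rewrite Q_tail, H2 by auto. unfold tail.
  rewrite !Cnorm2_toC, z_coord0, z_coordS, Nat.eqb_refl.
  simpl. pose proof (alpha_sq n). pose proof (beta_sq n). lra.
Qed.

Lemma z_ball n : ball (z n).
Proof. apply ball_Q. destruct (z_l2 n). split; auto. pose proof (t_bounds n). lra. Qed.

Lemma tailB_z n : tailB (z n) (z n) = RtoC (beta n * beta n).
Proof.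
  unfold tailB, Cseries, RtoC. f_equal.
  - rewrite (Series_ext _ (fun k => if Nat.eqb k n then beta n * beta n else 0)).
    + rewrite (Series_single _ n). rewrite Nat.eqb_refl; auto.
      intros k Hk. apply Nat.eqb_neq in Hk. rewrite Hk; auto.
    + intro k. rewrite z_coordS. destruct (Nat.eqb k n); simpl; ring.
  - rewrite (Series_ext _ (fun k => 0)).
    + rewrite (Series_single _ O); auto.
    + intro k. rewrite z_coordS. destruct (Nat.eqb k n); simpl; ring.
Qed.

(* f(z_n) = (t_n / 2) / (1 - (1 - t_n)) = 1/2 for every n. *)
Lemma f_z n : f_ex (z n) = ofC (RtoC (1/2)).
Proof.
  unfold f_ex, f_C. f_equal. rewrite z_coord0, tailB_z. pose proof (t_bounds n).
  rewrite <- RtoC_mult, <- RtoC_minus, <- RtoC_div. f_equal.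
  - rewrite alpha_sq, beta_sq. field. lra.
  - rewrite beta_sq. lra.
Qed.

(* z_n -> 0 weakly: L(z_n) = a_n L(e_0) + b_n L(e_(n+1)) -> 0. *)
Lemma z_weakly_null L : bounded_linear_functional L ->
  forall eps, 0 < eps -> exists N, forall n, (N <= n)%nat -> Cmod (toC (L (z n))) < eps.
Proof.
  intros HL eps Heps. pose proof HL as [Hadd [Hsc _]].
  set (A := Cmod (toC (L (e O)))).
  assert (HA : 0 <= A) by apply Cmod_ge_0.
  destruct (blf_basis_null L HL (eps/2) ltac:(lra)) as [N1 HN1].
  destruct (alpha_null (eps / 2 / (A + 1))) as [N2 HN2].
  { apply Rdiv_lt_0_compat; lra. }
  exists (max N1 N2). intros n Hn.
  unfold z. rewrite Hadd by (apply vscal_l2, e_l2). rewrite !Hsc by apply e_l2.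
  rewrite toC_add, !toC_mul.
  change (toC (mkC (alpha n) 0)) with (RtoC (alpha n)).
  change (toC (mkC (beta n) 0)) with (RtoC (beta n)).
  assert (H1 : Cmod (toC (L (e (S n)))) < eps / 2) by (apply HN1; lia).
  destruct (HN2 n ltac:(lia)) as [Ha0 Ha].
  assert (Hal : alpha n * A < eps / 2).
  { apply Rmult_lt_compat_r with (r := A + 1) in Ha; [|lra].
    replace (eps / 2 / (A + 1) * (A + 1)) with (eps / 2) in Ha by (field; lra). nra. }
  pose proof (beta_bounds n). pose proof (Cmod_ge_0 (toC (L (e (S n))))).
  eapply Rle_lt_trans. apply Cmod_triangle.
  rewrite !Cmod_mult, !Cmod_R, !Rabs_right by lra. fold A. nra.
Qed.

(** * The character: evaluation at z_n along a free ultrafilter *)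

Definition phi (U : (nat -> Prop) -> Prop) (g : V -> Cplx) : Cplx := Ulim U (fun n => g (z n)).

Definition one : V -> Cplx := fun _ => mkC 1 0.

Lemma one_Hinf : Hinf one.
Proof.
  split.
  - intros a Ha. exists (fun _ => C0). split; [split; [|split]|].
    + intros; cplx_ring.
    + intros; cplx_ring.
    + exists 0. intros x _. rewrite Cabs_C, toC_C0, Cmod_0. lra.
    + intros eps Heps. exists 1. split. lra. intros h Hh _ _.
      unfold one. replace (Csub (mkC 1 0) (Cadd (mkC 1 0) C0)) with C0 by cplx_ring.
      rewrite Cabs_C, toC_C0, Cmod_0. pose proof (l2norm_ge0 h). nra.
  - exists 1. intros x _. rewrite Cabs_C. change (toC (one x)) with (RtoC 1).
    rewrite Cmod_1. lra.
Qed.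

Lemma Hinf_along_z f : Hinf f -> Ubounded (fun n => f (z n)).
Proof.
  intros [_ [M HM]]. exists M. intro n. rewrite <- Cabs_C. apply HM, z_ball.
Qed.

Section Character.
Variable U : (nat -> Prop) -> Prop.
Hypothesis HU : free_ultrafilter U.

Lemma phi_spec f : Hinf f -> Uconv U (fun n => f (z n)) (phi U f).
Proof. intro Hf. apply Ulim_spec; auto. apply Hinf_along_z; auto. Qed.

Lemma phi_spectrum : in_spectrum (phi U).
Proof.
  split; [|split; [|split; [|split]]].
  - intros f g _ _ Heq. unfold phi.
    replace (fun n => f (z n)) with (fun n => g (z n)); auto.
    extensionality n. symmetry. apply Heq, z_ball.
  - intros f g Hf Hg. unfold phi; apply (Ulim_eq U HU).
    apply (Uconv_add U HU); apply phi_spec; auto.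
  - intros c f Hf. unfold phi; apply (Ulim_eq U HU).
    apply (Uconv_mul U HU (fun _ => c) _ c _ (Cmod (toC c))); auto.
    + intro; apply Rle_refl.
    + apply (Uconv_const U HU).
    + apply phi_spec; auto.
  - intros f g Hf Hg. destruct (Hinf_along_z f Hf) as [M HM]. unfold phi; apply (Ulim_eq U HU).
    apply (Uconv_mul U HU _ _ _ _ M); auto; apply phi_spec; auto.
  - exists one. split. apply one_Hinf.
    unfold phi, one. rewrite (Ulim_eq U HU _ (mkC 1 0)) by apply (Uconv_const U HU).
    intro E. injection E. lra.
Qed.

Lemma phi_fiber0 : in_fiber0 (phi U).
Proof.
  split. apply phi_spectrum.
  intros L HL. unfold phi; apply (Ulim_eq U HU). intros eps Heps.
  destruct (z_weakly_null L HL eps Heps) as [N HN].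
  apply (U_eventually U HU _ N). intros n Hn.
  rewrite toC_C0. replace (toC (L (z n)) - 0)%C with (toC (L (z n))) by ring. apply HN; auto.
Qed.

End Character.

Theorem mainTheorem3 :
  exists (S : V -> V) (phi : (V -> Cplx) -> Cplx) (f : V -> Cplx),
    finite_rank_operator S /\
    opnorm_is (fun x => vsub x (S x)) 1 /\
    in_fiber0 phi /\
    Hinf f /\
    phi f <> phi (fun x => f (vsub x (S x))).
Proof.
  destruct FrechetUltrafilter.exists_free_ultrafilter as [U HU].
  exists S0, (phi U), f_ex.
  split; [apply S0_finite_rank|].
  split; [apply P0_opnorm|].
  split; [apply phi_fiber0; auto|].
  split; [apply f_Hinf|].
  (* phi(f) = 1/2 since f(z_n) = 1/2, and phi(f o P) = 0 since f o P = 0 *)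
  unfold phi. rewrite (Ulim_eq U HU _ (ofC (RtoC (1/2)))), (Ulim_eq U HU _ C0).
  - intro E. injection E. lra.
  - replace (fun n => f_ex (vsub (z n) (S0 (z n)))) with (fun _ : nat => C0).
    + apply (Uconv_const U HU).
    + extensionality n. symmetry. apply f_P0.
  - replace (fun n => f_ex (z n)) with (fun _ : nat => ofC (RtoC (1/2))).
    + apply (Uconv_const U HU).
    + extensionality n. symmetry. apply f_z.
Qed.
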